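(* Let $l\ge 1$, let $1\le k\le l$ and let $S\subseteq\{1,\dots,l\}$. A key of length $l$ and index $k$ and a lock of length $l$ and index set $S$ can match (i.e. the key can be placed inside the lock, with its rectangle occupying the rectangular part of the lock's negative space, and the remaining uncovered part of the lock's negative space can be filled exactly by copies of the tooth) if and only if $k\in S$.
   Context: The tooth is the plus-shaped $9$-omino consisting of a central unit square and two unit squares extending in a straight line from it in each of the four directions. A key is a bump on an edge of a polyomino: a key of length $l$ and index $k$ is a $(6l-2)\times 1$ rectangle of unit squares, perpendicular to the edge, together with one copy of the tooth attached to the side of the rectangle at the $(6k-2)$-th square of the rectangle (counting from the square closest to the edge). A lock is a dent on an edge: the negative space of a lock of length $l$ and index set $S$ is a $(6l-2)\times 1$ rectangle perpendicular to the edge together with one tooth-shaped region attached (in the same manner as for a key) at the $(6x-2)$-th square (counting from the square closest to the edge) for every $x\in S$. *)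

(* Convention: the edge carrying the key/lock is the line y = 1/2, the
   rectangle is the column x = 0, rows y = 1 .. 6l-2 (row i is the i-th
   square counting from the edge), and teeth are attached on the side x > 0. *)
From Stdlib Require Import ZArith List Bool Lia.
Open Scope Z_scope.

Definition cell := (Z * Z)%type.

Definition in_tooth (c : cell) : bool :=
  let '(x, y) := c in
  ((x =? 0) && (Z.abs y <=? 2)) || ((y =? 0) && (Z.abs x <=? 2)).

Definition in_tooth_at (t c : cell) : bool :=
  in_tooth (fst c - fst t, snd c - snd t).

Definition in_rect (l : nat) (c : cell) : bool :=
  (fst c =? 0) && (1 <=? snd c) && (snd c <=? 6 * Z.of_nat l - 2).

(* Tooth attached to the side of the rectangle at its j-th square:
   its arm end is adjacent to square (0, j), so its centre is (3, j). *)
Definition tooth_attached (j : Z) (c : cell) : bool :=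
  in_tooth_at (3, j) c.

(* Key of length l and index k (placed in the lock position). *)
Definition in_key (l k : nat) (c : cell) : bool :=
  in_rect l c || tooth_attached (6 * Z.of_nat k - 2) c.

(* Negative space of a lock of length l and index set S. *)
Definition in_lock (l : nat) (S : list nat) (c : cell) : bool :=
  in_rect l c || existsb (fun x => tooth_attached (6 * Z.of_nat x - 2) c) S.

(* A region R (boolean predicate) is tiled exactly by the copies of the tooth
   translated by the vectors in ts: each cell of R lies in exactly one tile and
   each cell outside R lies in no tile.  (The tooth is invariant under all
   rotations and reflections, so copies of the tooth are just translates.) *)
Definition tiled_by_teeth (R : cell -> bool) (ts : list cell) : Prop :=
  forall c : cell,
    length (filter (fun t => in_tooth_at t c) ts) = (if R c then 1%nat else 0%nat).

Definition can_match (l k : nat) (S : list nat) : Prop :=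
  (forall c : cell, in_key l k c = true -> in_lock l S c = true) /\
  exists ts : list cell,
    tiled_by_teeth (fun c => in_lock l S c && negb (in_key l k c)) ts.

(* Teeth attached at different indices have centres 6 rows apart in the column
   x = 3, so they are pairwise disjoint and miss the rectangle in the column
   x = 0.  Hence the centre of the key's tooth lies in the lock's negative space
   only if the lock has a tooth at the same index, and when it does, removing
   the key leaves exactly the union of the lock's other teeth, which the copies
   of the tooth at those positions tile. *)
From Stdlib Require Import ZArith List Bool Lia.

Lemma length_filter_at_most_one (A : Type) (f : A -> bool) (L : list A) :
  NoDup L -> (forall x y, f x = true -> f y = true -> x = y) ->
  length (filter f L) = if existsb f L then 1%nat else 0%nat.
Proof.
  intros HL Huniq; induction HL as [|a L Ha _ IH]; cbn; [reflexivity|].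
  destruct (f a) eqn:Hfa; cbn; rewrite IH; [|reflexivity].
  destruct (existsb f L) eqn:HL; [|reflexivity].
  apply existsb_exists in HL as [x [HxL Hfx]].
  now rewrite (Huniq x a Hfx Hfa) in HxL.
Qed.

Lemma existsb_remove (f : nat -> bool) (k : nat) (S : list nat) :
  (forall x, f x = true -> f k = true -> x = k) ->
  existsb f (remove Nat.eq_dec k S) = existsb f S && negb (f k).
Proof.
  intros Huniq; apply eq_iff_eq_true.
  rewrite andb_true_iff, negb_true_iff, !existsb_exists; split.
  - intros [x [Hx Hfx]]; apply in_remove in Hx as [HxS Hxk].
    split; [now exists x|].
    destruct (f k) eqn:Hfk; [|reflexivity].
    now destruct (Hxk (Huniq x Hfx eq_refl)).
  - intros [[x [HxS Hfx]] Hfk]; exists x; split; [|exact Hfx].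
    apply in_in_remove; [|exact HxS].
    intros ->; congruence.
Qed.

Lemma existsb_nodup (f : nat -> bool) (L : list nat) :
  existsb f (nodup Nat.eq_dec L) = existsb f L.
Proof.
  apply eq_iff_eq_true; rewrite !existsb_exists.
  split; intros [x [Hx Hfx]]; exists x; now rewrite nodup_In in *.
Qed.

Definition tooth_centre (x : nat) : cell := (3, 6 * Z.of_nat x - 2).

Lemma in_tooth_at_self (t : cell) : in_tooth_at t t = true.
Proof. destruct t as [x y]; unfold in_tooth_at, in_tooth; cbn; now rewrite !Z.sub_diag. Qed.

Lemma teeth_disjoint (a b : nat) (c : cell) :
  in_tooth_at (tooth_centre a) c = true -> in_tooth_at (tooth_centre b) c = true -> a = b.
Proof.
  destruct c as [x y]; unfold in_tooth_at, in_tooth, tooth_centre; cbn [fst snd].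
  rewrite !orb_true_iff, !andb_true_iff, !Z.eqb_eq, !Z.leb_le; lia.
Qed.

Lemma rect_tooth_disjoint (l : nat) (j : Z) (c : cell) :
  in_rect l c = true -> tooth_attached j c = false.
Proof.
  destruct c as [x y]; unfold in_rect, tooth_attached, in_tooth_at, in_tooth; cbn [fst snd].
  rewrite !andb_true_iff, !Z.eqb_eq, !Z.leb_le; intros Hrect.
  apply not_true_is_false; rewrite !orb_true_iff, !andb_true_iff, !Z.eqb_eq, !Z.leb_le; lia.
Qed.

Lemma teeth_tiling (L : list nat) :
  tiled_by_teeth (fun c => existsb (fun x => in_tooth_at (tooth_centre x) c) L)
    (map tooth_centre (nodup Nat.eq_dec L)).
Proof.
  intros c; rewrite filter_map_swap, length_map, <- (existsb_nodup _ L).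
  apply length_filter_at_most_one; [apply NoDup_nodup|].
  intros a b; apply teeth_disjoint.
Qed.

Lemma key_fits_lock_iff (l k : nat) (S : list nat) :
  (forall c, in_key l k c = true -> in_lock l S c = true) <-> In k S.
Proof.
  unfold in_key, in_lock; split.
  - intros Hfit.
    assert (Hcentre : tooth_attached (6 * Z.of_nat k - 2) (tooth_centre k) = true)
      by apply in_tooth_at_self.
    specialize (Hfit (tooth_centre k)); rewrite Hcentre, orb_true_r in Hfit.
    destruct (orb_prop _ _ (Hfit eq_refl)) as [Hrect | Hteeth]; [discriminate|].
    apply existsb_exists in Hteeth as [x [HxS Hx]].
    now rewrite <- (teeth_disjoint x k _ Hx Hcentre).
  - intros HkS c; rewrite !orb_true_iff; intros [Hrect | Htooth]; [now left|].
    right; apply existsb_exists; now exists k.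
Qed.

Lemma lock_minus_key (l k : nat) (S : list nat) (c : cell) :
  in_lock l S c && negb (in_key l k c) =
  existsb (fun x => in_tooth_at (tooth_centre x) c) (remove Nat.eq_dec k S).
Proof.
  rewrite existsb_remove by (intros x; apply teeth_disjoint).
  unfold in_lock, in_key; destruct (in_rect l c) eqn:Hrect; cbn.
  - symmetry; apply not_true_is_false.
    rewrite andb_true_iff, existsb_exists; intros [[x [_ Hx]] _].
    exact (eq_true_false_abs _ Hx (rect_tooth_disjoint l _ c Hrect)).
  - reflexivity.
Qed.

Theorem lemma2p2 (l k : nat) (S : list nat)
  (hl : (1 <= l)%nat) (hk : (1 <= k <= l)%nat)
  (hS : forall x, In x S -> (1 <= x <= l)%nat) :
  can_match l k S <-> In k S.
Proof.
  split.
  - intros [Hfit _]; now apply key_fits_lock_iff in Hfit.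
  - intros HkS; split; [now apply key_fits_lock_iff|].
    exists (map tooth_centre (nodup Nat.eq_dec (remove Nat.eq_dec k S))).
    intros c; cbv beta; rewrite lock_minus_key; apply teeth_tiling.
Qed.
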